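(* Let $\mathcal{G}=(\mathcal{V},\mathcal{E},\mathcal{W})$ be an undirected weighted graph, let $\mathcal{E}_-$ be the set of negative-weight edges and $\mathcal{E}_+$ the set of positive-weight edges, with $|\mathcal{E}_-|>1$, and assume $\mathcal{G}_+=(\mathcal{V},\mathcal{E}_+)$ (with its weights) is connected. For each $k=(u_k,v_k)\in\mathcal{E}_-$ let $P_k\subseteq\mathcal{E}_+$ be the set of edges $e\in\mathcal{E}_+$ for which there exists a path in $\mathcal{G}_+$ from $u_k$ to $v_k$ using $e$, and assume $P_i\cap P_j=\emptyset$ for all distinct $i,j\in\mathcal{E}_-$. Let $\mathcal{R}_k(\mathcal{G}_+)=\mathcal{R}_{u_kv_k}(\mathcal{G}_+)$. Then $L(\mathcal{G})$ is positive semi-definite if and only if $|\mathcal{W}(k)|\le \mathcal{R}_k(\mathcal{G}_+)^{-1}$ for every $k\in\mathcal{E}_-$ (i.e. $|W_-|\le \mathbf{R}^{-1}$ with $W_-$ the diagonal matrix of negative weights and $\mathbf{R}=\mathrm{diag}(\mathcal{R}_k(\mathcal{G}_+))_{k\in\mathcal{E}_-}$).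
   Context: Weights $\mathcal{W}:\mathcal{E}\to\mathbb{R}\setminus\{0\}$; with an arbitrary edge orientation the incidence matrix $E$ has in the column of edge $(i,j)$ entry $+1$ in row $i$, $-1$ in row $j$, $0$ elsewhere; $L(\mathcal{G})=EWE^T$ with $W$ the diagonal weight matrix. Paths are simple paths. For a weighted graph $\mathcal{H}$ on $\mathcal{V}$, the effective resistance between $u,v$ is $\mathcal{R}_{uv}(\mathcal{H})=(\mathbf{e}_u-\mathbf{e}_v)^TL^{\dagger}(\mathcal{H})(\mathbf{e}_u-\mathbf{e}_v)$, with $L^{\dagger}$ the Moore–Penrose pseudo-inverse and $\mathbf{e}_u$ the standard basis vector of node $u$. *)

From HB Require Import structures.
From mathcomp Require Import all_boot all_order all_algebra.
From Stdlib Require Import ClassicalEpsilon.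
Set Implicit Arguments. Unset Strict Implicit. Unset Printing Implicit Defensive.
Import Order.TTheory GRing.Theory Num.Theory.
Local Open Scope ring_scope.

(* A weighted graph with vertex set 'I_n and edge set 'I_m; edge e joins
   src e and dst e (the arbitrary orientation of e), and has weight w e. *)

Definition edge_is (n m : nat) (src dst : 'I_m -> 'I_n) (e : 'I_m) (x y : 'I_n) : bool :=
  ((src e == x) && (dst e == y)) || ((src e == y) && (dst e == x)).

Definition incidence (n m : nat) (R : pzRingType) (src dst : 'I_m -> 'I_n) : 'M[R]_(n, m) :=
  \matrix_(i, e) ((i == src e)%:R - (i == dst e)%:R).

Definition laplacian (R : pzRingType) (n m : nat) (src dst : 'I_m -> 'I_n) (w : 'I_m -> R)
  : 'M[R]_n :=
  incidence R src dst *m diag_mx (\row_e w e) *m (incidence R src dst)^T.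

(* Weights of the positive subgraph G_+ (negative edges removed). *)
Definition pos_part (R : realFieldType) (m : nat) (w : 'I_m -> R) : 'I_m -> R :=
  fun e => if 0 < w e then w e else 0.

Definition penrose (R : realFieldType) (n : nat) (A X : 'M[R]_n) : Prop :=
  [/\ A *m X *m A = A, X *m A *m X = X, (A *m X)^T = A *m X & (X *m A)^T = X *m A].

Definition mp_pinv (R : realFieldType) (n : nat) (A : 'M[R]_n) : 'M[R]_n :=
  epsilon (inhabits 0) (penrose A).

Definition eff_res (R : realFieldType) (n : nat) (L : 'M[R]_n) (u v : 'I_n) : R :=
  let b : 'cV[R]_n := \col_i ((i == u)%:R - (i == v)%:R) in
  (b^T *m mp_pinv L *m b) 0 0.

Definition psd (R : realFieldType) (n : nat) (A : 'M[R]_n) : Prop :=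
  forall x : 'cV[R]_n, 0 <= (x^T *m A *m x) 0 0.

Definition pos_adj (R : realFieldType) (n m : nat) (src dst : 'I_m -> 'I_n) (w : 'I_m -> R)
  : rel 'I_n :=
  fun x y => [exists e, (0 < w e) && edge_is src dst e x y].

Definition pos_path_uses (R : realFieldType) (n m : nat) (src dst : 'I_m -> 'I_n)
  (w : 'I_m -> R) (u v : 'I_n) (e : 'I_m) : Prop :=
  exists s : seq 'I_n,
    [&& path (pos_adj src dst w) u s, last u s == v, uniq (u :: s)
      & has (fun xy => edge_is src dst e xy.1 xy.2) (zip (u :: s) s)].

Definition Pset (R : realFieldType) (n m : nat) (src dst : 'I_m -> 'I_n) (w : 'I_m -> R)
  (k : 'I_m) : 'I_m -> Prop :=
  fun e => 0 < w e /\ pos_path_uses src dst w (src k) (dst k) e.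

From HB Require Import structures.
From mathcomp Require Import all_boot all_order all_algebra ring lra.
From Stdlib Require Import ClassicalEpsilon.
Set Implicit Arguments. Unset Strict Implicit. Unset Printing Implicit Defensive.
Import Order.TTheory GRing.Theory Num.Theory.
Local Open Scope ring_scope.

(* For a negative edge k = (u, v), let y_k = L_+^+ (e_u - e_v) be the potential
   of a unit current from u to v in G_+; then R_k = y_k(u) - y_k(v) is also the
   energy of that current.  Current only flows through edges lying on simple
   G_+-paths from u to v, i.e. through P_k, so by disjointness y_k takes equal
   values at the two ends of every other negative edge.
   Necessity: the quadratic form of L(G) at y_k is W(k) R_k^2 + R_k.
   Sufficiency: Cauchy-Schwarz applied to Green's identity
   x(u) - x(v) = sum_e w_e (grad y_k)_e (grad x)_e bounds |W(k)| (x(u) - x(v))^2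
   by the G_+-energy of x on P_k, and disjointness lets these bounds add up. *)

Lemma sum_indicator_mul (R : pzSemiRingType) (I : finType) (s : I) (f : I -> R) :
  \sum_i (i == s)%:R * f i = f s.
Proof.
rewrite (bigD1 s) //= eqxx mul1r big1 ?addr0 // => i /negbTE ->; exact: mul0r.
Qed.

Definition dipole (R : pzRingType) (n : nat) (u v : 'I_n) : 'cV[R]_n :=
  \col_i ((i == u)%:R - (i == v)%:R).

Section Incidence.
Variables (R : comPzRingType) (n m : nat) (src dst : 'I_m -> 'I_n).
Local Notation E := (incidence R src dst).

Definition grad (x : 'cV[R]_n) (e : 'I_m) : R := x (src e) 0 - x (dst e) 0.

Lemma tr_incidence_mul (y : 'cV[R]_n) e : (E^T *m y) e 0 = grad y e.
Proof.
rewrite mxE; under eq_bigr => i _ do rewrite !mxE mulrBl.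
by rewrite sumrB !sum_indicator_mul.
Qed.

Lemma trmx_mul_incidence (x : 'cV[R]_n) e : (x^T *m E) 0 e = grad x e.
Proof.
rewrite mxE; under eq_bigr => i _ do rewrite !mxE mulrBr ![x i 0 * _]mulrC.
by rewrite sumrB !sum_indicator_mul.
Qed.

Lemma laplacian_bilinear (w : 'I_m -> R) (x y : 'cV[R]_n) :
  (x^T *m laplacian src dst w *m y) 0 0 = \sum_e w e * grad x e * grad y e.
Proof.
rewrite /laplacian !mulmxA -mulmxA mxE; apply: eq_bigr => e _.
by rewrite mul_mx_diag mxE trmx_mul_incidence tr_incidence_mul mxE [grad x e * _]mulrC.
Qed.

Lemma laplacian_quad (w : 'I_m -> R) (x : 'cV[R]_n) :
  (x^T *m laplacian src dst w *m x) 0 0 = \sum_e w e * grad x e ^+ 2.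
Proof. by rewrite laplacian_bilinear; apply: eq_bigr => e _; rewrite mulrA. Qed.

Lemma laplacian_mul (w : 'I_m -> R) (y : 'cV[R]_n) a :
  (laplacian src dst w *m y) a 0 = \sum_e E a e * w e * grad y e.
Proof.
rewrite /laplacian -mulmxA mxE; apply: eq_bigr => e _.
by rewrite mul_mx_diag mxE tr_incidence_mul !mxE.
Qed.

Lemma trmx_laplacian (w : 'I_m -> R) : (laplacian src dst w)^T = laplacian src dst w.
Proof. by rewrite /laplacian !trmx_mul trmxK tr_diag_mx mulmxA. Qed.

Lemma laplacian_mul_const (w : 'I_m -> R) p :
  laplacian src dst w *m (const_mx 1 : 'M_(n, p)) = 0.
Proof.
have L1 : laplacian src dst w *m (const_mx 1 : 'cV_n) = 0.
  apply/matrixP => i j; rewrite (ord1 j) laplacian_mul mxE big1 // => e _.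
  by rewrite /grad !mxE subrr mulr0.
apply/matrixP => i j; transitivity ((laplacian src dst w *m (const_mx 1 : 'cV_n)) i 0).
  by rewrite !mxE; apply: eq_bigr => k _; rewrite !mxE.
by rewrite L1 !mxE.
Qed.

Lemma const_mul_laplacian (w : 'I_m -> R) p :
  (const_mx 1 : 'M_(p, n)) *m laplacian src dst w = 0.
Proof.
by rewrite -[laplacian _ _ _]trmx_laplacian -(trmx_const _ _ 1) -trmx_mul laplacian_mul_const trmx0.
Qed.

Lemma dipole_tr_mul (u v : 'I_n) (x : 'cV[R]_n) :
  ((dipole R u v)^T *m x) 0 0 = x u 0 - x v 0.
Proof.
rewrite mxE; under eq_bigr => i _ do rewrite !mxE mulrBl.
by rewrite sumrB !sum_indicator_mul.
Qed.

Lemma const_mul_dipole (u v : 'I_n) p : (const_mx 1 : 'M[R]_(p, n)) *m dipole R u v = 0.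
Proof.
apply/matrixP => i j; rewrite !mxE.
under eq_bigr => k _ do rewrite !mxE mul1r -[(k == u)%:R]mulr1 -[(k == v)%:R]mulr1.
by rewrite sumrB !sum_indicator_mul subrr.
Qed.

End Incidence.

Lemma inj_col_unitmx (F : fieldType) (n : nat) (A : 'M[F]_n) :
  (forall x : 'cV_n, A *m x = 0 -> x = 0) -> A \in unitmx.
Proof.
move=> Ainj; rewrite -unitmx_tr -row_free_unit; apply: inj_row_free => v vA0.
apply: trmx_inj; rewrite trmx0; apply: Ainj.
by rewrite -[A]trmxK -trmx_mul vA0 trmx0.
Qed.

Section ConstantVectors.
Variables (R : numFieldType) (n : nat).

Lemma const_col_eq0 (x : 'cV[R]_n) :
  (forall i j, x i 0 = x j 0) -> (const_mx 1 : 'M_n) *m x = 0 -> x = 0.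
Proof.
move=> xconst /matrixP Jx; apply/matrixP => i j; rewrite (ord1 j) mxE.
have := Jx i 0; rewrite !mxE; under eq_bigr => k _ do rewrite mxE mul1r (xconst k i).
have n_gt0 : (0 < n)%N := leq_ltn_trans (leq0n i) (ltn_ord i).
rewrite sumr_const card_ord -mulr_natr => /eqP.
by rewrite mulf_eq0 pnatr_eq0 eqn0Ngt n_gt0 orbF => /eqP.
Qed.

Lemma scale_const_mx_sqr :
  n%:R^-1 *: ((const_mx 1 : 'M[R]_n) *m const_mx 1) = const_mx 1 :> 'M_n.
Proof.
case: n => [|k]; first by rewrite !thinmx0.
apply/matrixP => i j; rewrite !mxE.
under eq_bigr do rewrite !mxE mulr1.
by rewrite sumr_const card_ord -mulr_natr mul1r mulVf // pnatr_eq0.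
Qed.

End ConstantVectors.

Section PseudoInverse.
Variables (R : realFieldType) (n : nat).

Lemma penrose_shift (A J : 'M[R]_n) (c : R) :
  A^T = A -> J^T = J -> A *m J = 0 -> J *m A = 0 -> c *: (J *m J) = J ->
  A + c *: J \in unitmx -> penrose A (invmx (A + c *: J) - c *: J).
Proof.
move=> At Jt AJ JA JJ uM; set M := A + c *: J.
have JM : J *m M = J by rewrite mulmxDr JA add0r -scalemxAr.
have MJ : M *m J = J by rewrite mulmxDl AJ add0r -scalemxAl.
have JMi : J *m invmx M = J by rewrite -{1}JM mulmxK.
have MiJ : invmx M *m J = J by rewrite -{1}MJ mulKmx.
have defA : A = M - c *: J by rewrite addrK.
have AX : A *m (invmx M - c *: J) = 1%:M - c *: J.
  rewrite mulmxBr -scalemxAr AJ scaler0 subr0 defA mulmxBl mulmxV //.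
  by rewrite -scalemxAl JMi.
have XA : (invmx M - c *: J) *m A = 1%:M - c *: J.
  rewrite mulmxBl -scalemxAl JA scaler0 subr0 defA mulmxBr mulVmx //.
  by rewrite -scalemxAr MiJ.
have JX : J *m (invmx M - c *: J) = 0 by rewrite mulmxBr JMi -scalemxAr JJ subrr.
split.
- by rewrite AX mulmxBl mul1mx -scalemxAl JA scaler0 subr0.
- by rewrite XA mulmxBl mul1mx -scalemxAl JX scaler0 subr0.
- by rewrite AX linearB /= trmx1 linearZ /= Jt.
- by rewrite XA linearB /= trmx1 linearZ /= Jt.
Qed.

Lemma sym_penrose_mulmxA (A X : 'M[R]_n) : A^T = A -> penrose A X -> A *m (A *m X) = A.
Proof. by move=> At [AXA _ AXt _]; rewrite -{1}At -AXt -trmx_mul AXA At. Qed.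

End PseudoInverse.

Section MonotonePaths.
Variables (T : finType) (R : numDomainType) (f : T -> R) (r : rel T).
Local Notation descending := (fun x y => r x y && (f y < f x)).

Lemma descend_path (P : pred T) (t c : T) :
  (forall b, P b -> b != t -> exists b', [&& r b b', f b' < f b & P b']) ->
  P c -> exists p, path descending c p && (last c p == t).
Proof.
move=> step; have [N] := ubnP #|[set z | f z < f c]|.
elim: N c => [//|N IH] c below_c Pc.
case: (eqVneq c t) => [-> | ct]; first by exists [::]; rewrite /= eqxx.
have [c' /and3P [rcc' fc'c Pc']] := step c Pc ct.
have below_c' : (#|[set z | (f z < f c')%R]| < N)%N.
  rewrite ltnS in below_c; apply: leq_trans below_c; apply: proper_card.
  apply/properP; split; last by exists c'; rewrite !inE ?ltxx.
  by apply/subsetP => z; rewrite !inE => /lt_trans; apply.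
have [p /andP [pp lp]] := IH c' below_c' Pc'.
by exists (c' :: p); rewrite /= rcc' fc'c pp lp.
Qed.

End MonotonePaths.

Lemma climb_path (T : finType) (R : numDomainType) (f : T -> R) (r : rel T)
    (P : pred T) (s a : T) :
  (forall b, P b -> b != s -> exists b', [&& r b' b, f b < f b' & P b']) ->
  P a -> exists p, path (fun x y => r x y && (f y < f x)) s p && (last s p == a).
Proof.
move=> step Pa.
have step' b : P b -> b != s -> exists b', [&& r b' b, - f b' < - f b & P b'].
  by move=> Pb bs; have [b' ?] := step b Pb bs; exists b'; rewrite ltrN2.
have [q /andP [pq /eqP lq]] := descend_path (f := fun x => - f x) (r := fun x y => r y x) step' Pa.
have last_rev : last (last a q) (rev (belast a q)) = a.
  have := congr1 (last a) (congr1 rev (lastI a q)).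
  by rewrite rev_cons rev_rcons last_rcons /= => <-.
exists (rev (belast a q)); rewrite -lq last_rev eqxx andbT rev_path.
by rewrite (eq_path (e' := fun x y => r y x && (- f y < - f x))) // => x y; rewrite ltrN2.
Qed.

Lemma path_const_last (T : eqType) (U : Type) (r : rel T) (g : T -> U) x p :
  path r x p -> (forall q, q \in zip (x :: p) p -> r q.1 q.2 -> g q.1 = g q.2) ->
  g x = g (last x p).
Proof.
elim: p x => //= y p IH x /andP [rxy pp] gstep.
rewrite (gstep (x, y)) ?mem_head //; apply: IH => // q qp; apply: gstep.
by rewrite in_cons qp orbT.
Qed.

Lemma zip_cons_cat (T : Type) (x : T) (s t : seq T) :
  zip (x :: s ++ t) (s ++ t) = zip (x :: s) s ++ zip (last x s :: t) t.
Proof. by elim: s x => //= y s IH x; rewrite IH. Qed.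

Lemma sum_disjoint_le (R : numDomainType) (I J : finType) (P : pred I)
    (S : I -> pred J) (t : J -> R) :
  (forall j, 0 <= t j) -> (forall i i' j, P i -> P i' -> S i j -> S i' j -> i = i') ->
  \sum_(i | P i) \sum_(j | S i j) t j <= \sum_j t j.
Proof.
move=> t_ge0 disj; rewrite (exchange_big_dep xpredT) //=; apply: ler_sum => j _.
case: (pickP (fun i => P i && S i j)) => [i /andP [Pi Sij] | none]; last first.
  by rewrite big_pred0.
rewrite (bigD1 i) ?Pi ?Sij //= big1 ?addr0 // => i' /andP [/andP [Pi' Si'j] i'i].
by rewrite (disj _ _ _ Pi' Pi Si'j Sij) eqxx in i'i.
Qed.

Lemma psum_wsqr_eq0 (R : realDomainType) (I : finType) (P : pred I) (p a : I -> R) :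
  (forall i, 0 <= p i) -> \sum_(i | P i) p i * a i ^+ 2 = 0 ->
  forall i, P i -> p i * a i = 0.
Proof.
move=> p_ge0 sum0 i Pi.
have /eqP := psumr_eq0P (fun i _ => mulr_ge0 (p_ge0 i) (sqr_ge0 (a i))) sum0 Pi.
by rewrite mulf_eq0 sqrf_eq0 => /orP [] /eqP ->; rewrite ?mul0r ?mulr0.
Qed.

Lemma weighted_cauchy_schwarz (R : realFieldType) (I : finType) (P : pred I) (p a c : I -> R) :
  (forall i, 0 <= p i) ->
  (\sum_(i | P i) p i * a i * c i) ^+ 2 <=
  (\sum_(i | P i) p i * a i ^+ 2) * (\sum_(i | P i) p i * c i ^+ 2).
Proof.
move=> p_ge0.
set A := \sum_(i | P i) p i * a i ^+ 2.
set B := \sum_(i | P i) p i * a i * c i.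
set C := \sum_(i | P i) p i * c i ^+ 2.
have A_ge0 : 0 <= A by apply: sumr_ge0 => i _; rewrite mulr_ge0 ?sqr_ge0.
have [A0 | A_neq0] := eqVneq A 0.
  rewrite A0 mul0r /B big1 ?expr0n // => i Pi.
  by rewrite (psum_wsqr_eq0 p_ge0 A0 Pi) mul0r.
have A_gt0 : 0 < A by rewrite lt_neqAle eq_sym A_neq0.
have : 0 <= \sum_(i | P i) p i * (B * a i - A * c i) ^+ 2.
  by apply: sumr_ge0 => i _; rewrite mulr_ge0 ?sqr_ge0.
have -> : \sum_(i | P i) p i * (B * a i - A * c i) ^+ 2 = A * (A * C - B ^+ 2).
  transitivity (\sum_(i | P i) (B ^+ 2 * (p i * a i ^+ 2) - 2 * A * B * (p i * a i * c i)
      + A ^+ 2 * (p i * c i ^+ 2))); first by apply: eq_bigr => i _; ring.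
  by rewrite big_split sumrB /= -!mulr_sumr -/A -/B -/C; ring.
by rewrite pmulr_rge0 // subr_ge0 mulrC.
Qed.

Definition potential (R : realFieldType) (n m : nat) (src dst : 'I_m -> 'I_n)
    (w : 'I_m -> R) (u v : 'I_n) : 'cV[R]_n :=
  mp_pinv (laplacian src dst (pos_part w)) *m dipole R u v.

Section PositiveSubgraph.
Variables (R : realFieldType) (n m : nat) (src dst : 'I_m -> 'I_n) (w : 'I_m -> R).
Local Notation wp := (pos_part w).
Local Notation Lp := (laplacian src dst (pos_part w)).
Local Notation adj := (pos_adj src dst w).
Local Notation grad := (grad src dst).
Local Notation y := (potential src dst w).

Lemma pos_part_ge0 e : 0 <= wp e.
Proof. by rewrite /pos_part; case: ifP => // /ltW. Qed.

Lemma pos_part_id e : 0 < w e -> wp e = w e.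
Proof. by rewrite /pos_part => ->. Qed.

Lemma pos_part_eq0 e : w e <= 0 -> wp e = 0.
Proof. by rewrite /pos_part leNgt => /negbTE ->. Qed.

Lemma pos_adj_sym x z : adj x z = adj z x.
Proof. by apply: eq_existsb => e; rewrite /edge_is orbC. Qed.

Lemma edge_grad0 (x : 'cV[R]_n) e a c :
  edge_is src dst e a c -> grad x e = 0 -> x a 0 = x c 0.
Proof.
move=> eac /eqP; rewrite subr_eq0 => /eqP.
by case/orP: eac => /andP [/eqP <- /eqP <-].
Qed.

Lemma eff_res_potential u v : eff_res Lp u v = y u v u 0 - y u v v 0.
Proof. by rewrite /eff_res -mulmxA dipole_tr_mul. Qed.

Hypothesis no_loop : forall e, src e != dst e.

(* [(Lp *m x) a 0] is the net current leaving [a] under the potential [x]. *)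
Lemma pos_laplacian_ascent (x : 'cV[R]_n) a c :
  (Lp *m x) a 0 <= 0 -> adj a c -> x c 0 < x a 0 -> exists b, adj b a && (x a 0 < x b 0).
Proof.
rewrite laplacian_mul => out_le0 /existsP [e0 /andP [we0 e0ac]] xca.
pose t e := incidence R src dst a e * wp e * grad x e.
have ac : a != c by apply: contraTneq xca => ->; rewrite ltxx.
have t_e0 : 0 < t e0.
  rewrite /t /grad mxE pos_part_id //.
  case/orP: e0ac => /andP [/eqP -> /eqP ->]; rewrite (eqxx a) (negbTE ac) /=.
  - by rewrite subr0 mul1r mulr_gt0 ?subr_gt0.
  - by rewrite sub0r mulN1r mulNr -mulrN opprB mulr_gt0 ?subr_gt0.
have [g tg_lt0 | t_ge0] := pickP (fun g => t g < 0); last first.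
  have : 0 < \sum_e t e.
    by rewrite (bigD1 e0) //= ltr_pwDl // sumr_ge0 // => g _; rewrite leNgt t_ge0.
  by rewrite ltNge out_le0.
move: tg_lt0; rewrite /t /grad mxE.
have [wg | wg] := boolP (0 < w g); last by rewrite pos_part_eq0 ?leNgt // mulr0 mul0r ltxx.
rewrite pos_part_id //.
have [<- | sa] := eqVneq (src g) a.
  rewrite (negbTE (no_loop g)) /= subr0 mul1r pmulr_rlt0 // subr_lt0 => xdst.
  exists (dst g); rewrite xdst andbT; apply/existsP; exists g.
  by rewrite wg /edge_is !eqxx orbT.
have [<- | da] := eqVneq (dst g) a.
  rewrite /= sub0r mulN1r mulNr oppr_lt0 pmulr_rgt0 // subr_gt0 => xsrc.
  exists (src g); rewrite xsrc andbT; apply/existsP; exists g.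
  by rewrite wg /edge_is !eqxx.
by rewrite subrr !mul0r ltxx.
Qed.

Section Connected.
Hypothesis pos_connected : forall u v, connect adj u v.

Lemma connected_const (f : 'I_n -> R) :
  (forall x z, adj x z -> f x = f z) -> forall a c, f a = f c.
Proof.
move=> fadj a c; have /connectP [p pp ->] := pos_connected a c.
by elim: p a pp => //= b p IH a /andP [ab /IH <-]; apply: fadj.
Qed.

Lemma ker_pos_laplacian_const (z : 'cV[R]_n) :
  Lp *m z = 0 -> forall a c, z a 0 = z c 0.
Proof.
move=> Lz; have energy0 : \sum_e wp e * grad z e ^+ 2 = 0.
  by rewrite -laplacian_quad -mulmxA Lz mulmx0 mxE.
apply: connected_const => a c /existsP [e /andP [we eac]].
apply: edge_grad0 eac _; apply/eqP.
have /eqP := psum_wsqr_eq0 pos_part_ge0 energy0 (i := e) isT.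
by rewrite pos_part_id // mulf_eq0 (gt_eqF we).
Qed.

(* The kernel of [Lp] is spanned by the all-ones vector and [J / n] is the
   projection onto it, so [invmx (Lp + J / n) - J / n] is the pseudo-inverse. *)
Lemma pos_laplacian_pinv : penrose Lp (mp_pinv Lp).
Proof.
apply: (epsilon_spec (inhabits 0) (penrose Lp)).
pose J := const_mx 1 : 'M[R]_n; pose c : R := n%:R^-1.
have JM : J *m (Lp + c *: J) = J.
  by rewrite mulmxDr const_mul_laplacian add0r -scalemxAr scale_const_mx_sqr.
exists (invmx (Lp + c *: J) - c *: J).
apply: penrose_shift; rewrite ?trmx_laplacian ?trmx_const ?laplacian_mul_const
  ?const_mul_laplacian ?scale_const_mx_sqr //.
apply: inj_col_unitmx => x Mx.
have Jx : J *m x = 0 by rewrite -JM -mulmxA Mx mulmx0.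
have Lx : Lp *m x = 0 by move: Mx; rewrite mulmxDl -scalemxAl Jx scaler0 addr0.
exact: const_col_eq0 (ker_pos_laplacian_const Lx) Jx.
Qed.

Lemma pos_laplacian_potential u v : Lp *m y u v = dipole R u v.
Proof.
have LLX := sym_penrose_mulmxA (trmx_laplacian _ _ _) pos_laplacian_pinv.
set b := dipole R u v; set z := b - Lp *m y u v.
have Lz : Lp *m z = 0.
  by rewrite mulmxBr /potential (mulmxA Lp (mp_pinv Lp)) (mulmxA Lp) LLX subrr.
have Jz : (const_mx 1 : 'M_n) *m z = 0.
  by rewrite mulmxBr mulmxA const_mul_laplacian mul0mx const_mul_dipole subrr.
by apply/eqP; rewrite eq_sym -subr_eq0 -/z (const_col_eq0 (ker_pos_laplacian_const Lz) Jz).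
Qed.

Lemma green_potential u v (x : 'cV[R]_n) :
  x u 0 - x v 0 = \sum_e wp e * grad (y u v) e * grad x e.
Proof.
by rewrite -dipole_tr_mul -pos_laplacian_potential trmx_mul trmx_laplacian
  laplacian_bilinear.
Qed.

Lemma eff_res_energy u v : eff_res Lp u v = \sum_e wp e * grad (y u v) e ^+ 2.
Proof.
by rewrite eff_res_potential green_potential; apply: eq_bigr => e _; rewrite mulrA.
Qed.

Lemma eff_res_gt0 u v : u != v -> 0 < eff_res Lp u v.
Proof.
move=> uv; rewrite lt0r eff_res_energy sumr_ge0 ?andbT; last first.
  by move=> e _; rewrite mulr_ge0 ?pos_part_ge0 ?sqr_ge0.
apply/negP => /eqP energy0.
have := green_potential u v (\col_i (i == u)%:R).
rewrite !mxE eqxx eq_sym (negbTE uv) subr0 big1 => [/eqP | e _].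
  by rewrite oner_eq0.
by rewrite (psum_wsqr_eq0 pos_part_ge0 energy0 (i := e)) ?mul0r.
Qed.

Lemma potential_ascent u v b : b != u ->
  [exists c, adj b c && (y u v c 0 < y u v b 0)] ->
  exists b', adj b' b && (y u v b 0 < y u v b' 0).
Proof.
move=> bu /existsP [c /andP [bc ycb]]; apply: pos_laplacian_ascent bc ycb.
by rewrite pos_laplacian_potential mxE (negbTE bu) sub0r oppr_le0.
Qed.

Lemma potential_descent u v b : b != v ->
  [exists a, adj b a && (y u v b 0 < y u v a 0)] ->
  exists b', adj b b' && (y u v b' 0 < y u v b 0).
Proof.
move=> bv /existsP [a /andP [ba yba]].
have out : (Lp *m - y u v) b 0 <= 0.
  by rewrite mulmxN pos_laplacian_potential !mxE (negbTE bv) subr0 oppr_le0.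
have oppyE i : (- y u v) i 0 = - y u v i 0 by rewrite mxE.
have yab : (- y u v) a 0 < (- y u v) b 0 by rewrite !oppyE ltrN2.
have [b' /andP [b'b]] := pos_laplacian_ascent out ba yab.
by rewrite !oppyE ltrN2 => ybb'; exists b'; rewrite pos_adj_sym b'b.
Qed.

(* Current flows through [e] from its higher to its lower end.  Tracing it
   upstream reaches [u] and downstream reaches [v]; the potential decreases
   strictly along the way, so the walk is simple. *)
Lemma potential_edge_on_path u v e :
  0 < w e -> grad (y u v) e != 0 -> pos_path_uses src dst w u v e.
Proof.
pose f k := y u v k 0.
move=> we; rewrite subr_eq0 -/(f (src e)) -/(f (dst e)) => ye.
have [a [c [eac fca]]] : exists a c, edge_is src dst e a c /\ f c < f a.
  case: (ltgtP (f (src e)) (f (dst e))) => yse; last by rewrite yse eqxx in ye.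
  - by exists (dst e), (src e); rewrite /edge_is !eqxx orbT.
  - by exists (src e), (dst e); rewrite /edge_is !eqxx.
have ac : adj a c by apply/existsP; exists e; rewrite we eac.
have [s1 /andP [p1 /eqP l1]] :
    exists s1, path (fun x z => adj x z && (f z < f x)) u s1 && (last u s1 == a).
  apply: (climb_path (P := fun b => (b == u) || [exists c, adj b c && (f c < f b)])).
    move=> b Pb bu; move: Pb; rewrite (negbTE bu) => /= lower.
    have [b' /andP [b'b fbb']] := potential_ascent bu lower.
    by exists b'; rewrite b'b fbb'; apply/orP; right; apply/existsP; exists b; rewrite b'b.
  by apply/orP; right; apply/existsP; exists c; rewrite ac.
have [s2 /andP [p2 /eqP l2]] :
    exists s2, path (fun x z => adj x z && (f z < f x)) c s2 && (last c s2 == v).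
  apply: (descend_path (P := fun b => (b == v) || [exists a, adj b a && (f b < f a)])).
    move=> b Pb bv; move: Pb; rewrite (negbTE bv) => /= upper.
    have [b' /andP [bb' fb'b]] := potential_descent bv upper.
    by exists b'; rewrite bb' fb'b; apply/orP; right; apply/existsP; exists b;
      rewrite pos_adj_sym bb'.
  by apply/orP; right; apply/existsP; exists a; rewrite pos_adj_sym ac.
have p12 : path (fun x z => adj x z && (f z < f x)) u (s1 ++ c :: s2).
  by rewrite cat_path p1 l1 /= ac fca.
exists (s1 ++ c :: s2); apply/and4P; split.
- by apply: sub_path p12 => x z /andP [].
- by rewrite last_cat l1 /= l2.
- apply: (@map_uniq _ _ f); rewrite -rev_uniq; apply: lt_sorted_uniq.
  by rewrite rev_sorted /= path_map; apply: sub_path p12 => x z /andP [].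
- by rewrite zip_cons_cat has_cat l1 /= eac orbT.
Qed.

End Connected.
End PositiveSubgraph.

Section DisjointPaths.
Variables (R : realFieldType) (n m : nat) (src dst : 'I_m -> 'I_n) (w : 'I_m -> R).
Hypothesis no_loop : forall e, src e != dst e.
Hypothesis weight_neq0 : forall e, w e != 0.
Hypothesis pos_connected : forall u v, connect (pos_adj src dst w) u v.
Hypothesis disjoint_paths : forall i j e, w i < 0 -> w j < 0 -> i != j ->
  Pset src dst w i e -> Pset src dst w j e -> False.

Local Notation wp := (pos_part w).
Local Notation Lp := (laplacian src dst (pos_part w)).
Local Notation grad := (grad src dst).
Local Notation y k := (potential src dst w (src k) (dst k)).
Local Notation res k := (eff_res Lp (src k) (dst k)).

Lemma weight_lt0 e : ~~ (0 < w e) -> w e < 0.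
Proof. by rewrite -leNgt lt_neqAle weight_neq0. Qed.

Lemma potential_Pset k e : 0 < w e -> grad (y k) e != 0 -> Pset src dst w k e.
Proof. by move=> we ye; split; last exact: potential_edge_on_path. Qed.

Lemma potential_grad_neg0 j k : w j < 0 -> w k < 0 -> j != k -> grad (y k) j = 0.
Proof.
move=> wj wk jk; have /connectP [p pp] := pos_connected (src j) (dst j).
case: (shortenP pp) => s ps us _ lp.
apply/eqP; rewrite subr_eq0 lp; apply/eqP.
apply: (path_const_last (g := fun z => y k z 0) ps) => q qs /existsP [f /andP [wf fq]].
apply: (edge_grad0 fq); apply/eqP; apply: contraT => yf.
case: (disjoint_paths wj wk jk _ (potential_Pset wf yf)); split => //.
by exists s; rewrite ps -lp eqxx us /=; apply/hasP; exists q.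
Qed.

Lemma psd_neg_weight_le :
  psd (laplacian src dst w) -> forall k, w k < 0 -> `|w k| <= (res k)^-1.
Proof.
move=> Lpsd k wk; have res_gt0 : 0 < res k := eff_res_gt0 pos_connected (no_loop k).
have grad_yk : grad (y k) k = res k by rewrite eff_res_potential.
have energy : \sum_e w e * grad (y k) e ^+ 2 = w k * res k ^+ 2 + res k.
  rewrite (bigD1 k) //= grad_yk; congr (_ + _).
  rewrite (eff_res_energy pos_connected) [in RHS](bigD1 k) //=.
  rewrite (pos_part_eq0 (ltW wk)) mul0r add0r.
  apply: eq_bigr => e ek; have [we | /weight_lt0 we] := boolP (0 < w e).
    by rewrite pos_part_id.
  by rewrite (pos_part_eq0 (ltW we)) (potential_grad_neg0 we wk ek) expr2 !mulr0.
have := Lpsd (y k); rewrite laplacian_quad energy => q_ge0.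
rewrite (ler0_norm (ltW wk)) -[(res k)^-1]mul1r ler_pdivlMr //; nra.
Qed.

Definition current_support k e := (0 < w e) && (grad (y k) e != 0).

Lemma sum_current_support k (F : 'I_m -> R) :
  (forall e, wp e * grad (y k) e = 0 -> F e = 0) ->
  \sum_e F e = \sum_(e | current_support k e) F e.
Proof.
move=> F0; rewrite [RHS]big_mkcond; apply: eq_bigr => e _; case: ifP => // /negbT.
case/nandP => [/negbTE we | /negPn /eqP ye]; apply: F0.
  by rewrite pos_part_eq0 ?mul0r // leNgt we.
by rewrite ye mulr0.
Qed.

Lemma neg_weight_energy_bound (x : 'cV[R]_n) k : w k < 0 -> `|w k| <= (res k)^-1 ->
  - w k * grad x k ^+ 2 <= \sum_(e | current_support k e) wp e * grad x e ^+ 2.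
Proof.
move=> wk; have res_gt0 : 0 < res k := eff_res_gt0 pos_connected (no_loop k).
rewrite (ler0_norm (ltW wk)) -[(res k)^-1]mul1r ler_pdivlMr // => wres.
have := weighted_cauchy_schwarz (current_support k) (grad (y k)) (grad x) (pos_part_ge0 w).
rewrite -sum_current_support => [|e ->]; last by rewrite mul0r.
rewrite -(green_potential pos_connected) -sum_current_support => [|e]; last first.
  by rewrite mulrA => ->; rewrite mul0r.
rewrite -(eff_res_energy pos_connected) => cs.
have {}cs : grad x k ^+ 2 <= res k * \sum_(e | current_support k e) wp e * grad x e ^+ 2
  := cs.
have : 0 <= \sum_(e | current_support k e) wp e * grad x e ^+ 2.
  by apply: sumr_ge0 => e _; rewrite mulr_ge0 ?pos_part_ge0 ?sqr_ge0.
nra.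
Qed.

Lemma neg_weight_le_psd :
  (forall k, w k < 0 -> `|w k| <= (res k)^-1) -> psd (laplacian src dst w).
Proof.
move=> bound x; rewrite laplacian_quad.
pose t e := wp e * grad x e ^+ 2.
have t_ge0 e : 0 <= t e by rewrite mulr_ge0 ?pos_part_ge0 ?sqr_ge0.
have split : \sum_e w e * grad x e ^+ 2 =
    \sum_e t e + \sum_(k | w k < 0) w k * grad x k ^+ 2.
  rewrite [X in _ + X]big_mkcond -big_split; apply: eq_bigr => e _ /=.
  have [we | /weight_lt0 we] := boolP (0 < w e).
    by rewrite /t (pos_part_id we) (lt_gtF we) addr0.
  by rewrite /t (pos_part_eq0 (ltW we)) we mul0r add0r.
have disjoint : \sum_(k | w k < 0) \sum_(e | current_support k e) t e <= \sum_e t e.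
  apply: sum_disjoint_le => // i j e wi wj /andP [we yi] /andP [_ yj].
  have [// | ij] := eqVneq i j.
  by case: (disjoint_paths wi wj ij (potential_Pset we yi) (potential_Pset we yj)).
have : 0 <= \sum_(k | w k < 0) (w k * grad x k ^+ 2 + \sum_(e | current_support k e) t e).
  apply: sumr_ge0 => k wk.
  by have := neg_weight_energy_bound x wk (bound k wk); lra.
rewrite big_split /= split; lra.
Qed.

End DisjointPaths.

Theorem theorem3 (R : realFieldType) (n m : nat)
  (src dst : 'I_m -> 'I_n) (w : 'I_m -> R)
  (* simple undirected graph with nonzero weights *)
  (Hloop : forall e, src e != dst e)
  (Hsimple : forall e f x y, edge_is src dst e x y -> edge_is src dst f x y -> e = f)
  (Hw0 : forall e, w e != 0)
  (* more than one negative edge *)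
  (Hneg : (1 < #|[set k | (w k < 0)%R]|)%N)
  (* G_+ connected *)
  (Hconn : forall u v : 'I_n, connect (pos_adj src dst w) u v)
  (* the sets P_k are pairwise disjoint *)
  (Hdisj : forall i j e, w i < 0 -> w j < 0 -> i != j ->
      Pset src dst w i e -> Pset src dst w j e -> False) :
  psd (laplacian src dst w) <->
  (forall k, w k < 0 ->
     `|w k| <= (eff_res (laplacian src dst (pos_part w)) (src k) (dst k))^-1).
Proof.
split; first exact: psd_neg_weight_le Hloop Hw0 Hconn Hdisj.
exact: neg_weight_le_psd Hloop Hw0 Hconn Hdisj.
Qed.
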